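(* Let $V_1,V_2,U,\tilde V_1,\tilde V_2,\tilde U\in\mathbb{R}[x]$ and $\alpha,\beta\in\mathbb{R}$ with $\alpha\ne0$, and let $m_1,m_2,\tilde m_1,\tilde m_2\ge3$ be integers with $\gcd(m_1,m_2)=1$ and $\gcd(\tilde m_1,\tilde m_2)=1$. Suppose that $$V_1\circ T_{m_1}+V_2\circ T_{m_2}=\tilde U\circ T_{\tilde m_1\tilde m_2}\circ(\alpha x+\beta)$$ and $$\tilde V_1\circ T_{\tilde m_1}\circ(\alpha x+\beta)+\tilde V_2\circ T_{\tilde m_2}\circ(\alpha x+\beta)=U\circ T_{m_1m_2},$$ where both sides of each equality are non-constant polynomials. Then $\alpha=\pm1$ and $\beta=0$.
   Context: $T_k$ denotes the Chebyshev polynomial of the first kind of degree $k$, $T_k(\cos\phi)=\cos(k\phi)$. $\circ$ denotes composition of polynomials. *)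

From HB Require Import structures.
From mathcomp Require Import all_boot all_order all_algebra.
Set Implicit Arguments. Unset Strict Implicit. Unset Printing Implicit Defensive.
Import Order.TTheory GRing.Theory Num.Theory.
Local Open Scope ring_scope.

Fixpoint cheb_pair (R : nzRingType) (n : nat) : {poly R} * {poly R} :=
  match n with
  | 0%N => (1, 'X)
  | n'.+1 => let (a, b) := cheb_pair R n' in (b, 2%:R *: 'X * b - a)
  end.

Definition cheb (R : nzRingType) (n : nat) : {poly R} := (cheb_pair R n).1.

Lemma cheb0 (R : nzRingType) : cheb R 0 = 1.
Proof. by []. Qed.

Lemma cheb1 (R : nzRingType) : cheb R 1 = 'X.
Proof. by []. Qed.

Lemma chebSS (R : nzRingType) n :
  cheb R n.+2 = 2%:R *: 'X * cheb R n.+1 - cheb R n.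
Proof. by rewrite /cheb /=; case: (cheb_pair R n). Qed.

(* Substituting x = (z + 1/z)/2 into a polynomial of degree at most D and clearing the
   denominator (2z)^D gives a polynomial in z of degree 2D, and T_n becomes
   2^(n-1) (z^(2n) + 1).  So the transform of V o T_n only has exponents congruent to D
   modulo n.  For G := U~ o T_(m~1 m~2) this forces the coefficients of z^(2D-1), ...,
   z^(2D-6) to vanish (m~1 m~2 > 6), which determines the top coefficients of G.  For
   G o (a x + b) = V1 o T_m1 + V2 o T_m2 the coefficient of z^(2D-k) can only be nonzero
   when m1 or m2 divides D - k.  If b <> 0, the coefficient of z^(2D-1) is nonzero, so
   the one of z^(2D-2) vanishes, which yields a^2 = 1 - 2(D-1) b^2 < 1.  If b = 0 and
   a^2 > 1, the coefficients of z^(2D-2), z^(2D-4), z^(2D-6) are all nonzero, which is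
   impossible for coprime m1, m2 >= 3.  Hence a^2 <= 1, strictly if b <> 0; the second
   equation gives the same for the inverse map (x - b)/a, so a^2 = 1 and b = 0. *)

From HB Require Import structures.
From mathcomp Require Import all_boot all_order all_algebra.
From mathcomp Require Import ring lra zify.
Import Order.TTheory GRing.Theory Num.Theory.

Lemma dvdn_gap m x y : 2 < m -> m %| x -> m %| y -> y < x -> 2 < x - y.
Proof.
move=> m_gt2 mx my yx; apply: leq_trans m_gt2 _.
by apply: dvdn_leq; rewrite ?subn_gt0 ?dvdn_sub.
Qed.

Lemma dvdn_gap4 m x y : 2 < m -> m != 4 -> m %| x -> m %| y -> x - y != 4.
Proof.
move=> m_gt2 m_neq4 mx my; apply/eqP=> xy4; have := dvdn_sub mx my.
rewrite xy4 => m_dvd4; have m_le4 := dvdn_leq (isT : 0 < 4) m_dvd4.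
have m3 : m = 3 by lia.
by rewrite m3 in m_dvd4.
Qed.

Ltac close_multiples :=
  match goal with
  | Hm : is_true (2 < ?m), H1 : is_true (?m %| ?x), H2 : is_true (?m %| ?y) |- _ =>
      solve [ have := dvdn_gap _ _ _ Hm H1 H2; lia ]
  | Hm : is_true (2 < ?m), Hn : is_true (?m != 4), H1 : is_true (?m %| ?x),
    H2 : is_true (?m %| ?y) |- _ =>
      solve [ have := dvdn_gap4 _ _ _ Hm Hn H1 H2; lia ]
  end.

Lemma no_three_consecutive_multiples {m1 m2 D} : 2 < m1 -> 2 < m2 -> 2 <= D ->
  (m1 %| D) || (m2 %| D) -> (m1 %| D - 1) || (m2 %| D - 1) ->
  ~~ ((m1 %| D - 2) || (m2 %| D - 2)).
Proof.
by move=> m1_gt2 m2_gt2 D_ge2 /orP[] ? /orP[] ?; apply/negP => /orP[] ?; close_multiples.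
Qed.

Lemma no_four_even_spaced_multiples {m1 m2 D} : 2 < m1 -> 2 < m2 -> coprime m1 m2 ->
  6 <= D -> (m1 %| D) || (m2 %| D) -> (m1 %| D - 2) || (m2 %| D - 2) ->
  (m1 %| D - 4) || (m2 %| D - 4) -> ~~ ((m1 %| D - 6) || (m2 %| D - 6)).
Proof.
move=> m1_gt2 m2_gt2 cop D_ge6.
have [m1_neq4|m2_neq4] : m1 != 4 \/ m2 != 4.
  by case: (eqVneq m1 4) cop => [->|]; [case: (eqVneq m2 4) => [->|]; [|right] | left].
all: by move=> /orP[] ? /orP[] ? /orP[] ?; apply/negP => /orP[] ?; close_multiples.
Qed.

Local Open Scope ring_scope.

Lemma big_ord_top (V : nmodType) (f : nat -> V) D k : (k <= D)%N ->
  (forall i, (i < D - k)%N -> f i = 0) ->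
  \sum_(i < D.+1) f i = \sum_(l < k.+1) f (D - l)%N.
Proof.
move=> kD f0; rewrite -(big_mkord xpredT f).
rewrite (@big_cat_nat _ _ _ (D - k)) /=; [|by []|by lia].
rewrite big_nat_cond big1 ?add0r; last by move=> i /andP [/andP [_ Hi] _]; exact: f0.
rewrite big_nat_rev /= -{1}[(D - k)%N]add0n big_addn -(big_mkord xpredT (fun l => f (D - l)%N)).
have -> : (D.+1 - (D - k) = k.+1)%N by lia.
apply: eq_big_nat => i /andP [_ Hi]; congr f; lia.
Qed.

Section Joukowski.
Variable R : comNzRingType.
Implicit Types p q : {poly R}.

(* joukowski D p = (2X)^D p((X^2 + 1)/(2X)), the substitution x = (z + 1/z)/2 with the
   denominator cleared; it is meant for size p <= D + 1. *)
Definition jnum : {poly R} := 'X^2 + 1.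
Definition jden : {poly R} := 'X *+ 2.
Definition joukowski (D : nat) p : {poly R} :=
  \sum_(i < D.+1) p`_i *: (jnum ^+ i * jden ^+ (D - i)).

Lemma joukowskiD D p q : joukowski D (p + q) = joukowski D p + joukowski D q.
Proof. by rewrite /joukowski -big_split; apply: eq_bigr => i _; rewrite coefD scalerDl. Qed.

Lemma joukowskiZ D c p : joukowski D (c *: p) = c *: joukowski D p.
Proof. by rewrite /joukowski scaler_sumr; apply: eq_bigr => i _; rewrite coefZ scalerA. Qed.

Lemma joukowski0 D : joukowski D 0 = 0.
Proof. by rewrite /joukowski big1 // => i _; rewrite coef0 scale0r. Qed.

Lemma joukowskiN D p : joukowski D (- p) = - joukowski D p.
Proof. by rewrite -scaleN1r joukowskiZ scaleN1r. Qed.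

Lemma joukowskiB D p q : joukowski D (p - q) = joukowski D p - joukowski D q.
Proof. by rewrite joukowskiD joukowskiN. Qed.

Lemma joukowski_sum D I (r : seq I) (P : pred I) (F : I -> {poly R}) :
  joukowski D (\sum_(i <- r | P i) F i) = \sum_(i <- r | P i) joukowski D (F i).
Proof. by apply: (big_morph (joukowski D) (joukowskiD D) (joukowski0 D)). Qed.

Lemma joukowskiC D c : joukowski D c%:P = c *: jden ^+ D.
Proof.
rewrite /joukowski big_ord_recl /= coefC eqxx expr0 mul1r subn0 big1 ?addr0 // => i _.
by rewrite coefC /= scale0r.
Qed.

Lemma joukowski_succ D p : (size p <= D.+1)%N -> joukowski D.+1 p = jden * joukowski D p.
Proof.
move=> sp; rewrite /joukowski big_ord_recr /= (nth_default 0 sp) scale0r addr0 mulr_sumr.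
by apply: eq_bigr => i _; rewrite subSn ?exprS 1?mulrCA ?scalerAr // -ltnS.
Qed.

Lemma joukowski_add D k p : (size p <= D.+1)%N -> joukowski (D + k) p = jden ^+ k * joukowski D p.
Proof.
move=> sp; elim: k => [|k IH]; first by rewrite addn0 expr0 mul1r.
rewrite addnS joukowski_succ ?IH ?exprS ?mulrA //.
by apply: (leq_trans sp); rewrite ltnS leq_addr.
Qed.

Lemma joukowski_mulX D p : joukowski D.+1 ('X * p) = jnum * joukowski D p.
Proof.
rewrite /joukowski big_ord_recl /= coefXM eqxx scale0r add0r mulr_sumr.
apply: eq_bigr => i _ /=; rewrite coefXM /= subSS exprS -mulrA scalerAr //.
Qed.

Lemma joukowskiM D1 D2 p q : (size p <= D1.+1)%N -> (size q <= D2.+1)%N ->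
  joukowski (D1 + D2) (p * q) = joukowski D1 p * joukowski D2 q.
Proof.
move=> sp; elim/poly_ind: q D2 => [|q c IH] D2 sq.
  by rewrite mulr0 !joukowski0 mulr0.
have [-> | nq] := eqVneq q 0.
  rewrite mul0r add0r mulrC mul_polyC joukowskiZ joukowskiC joukowski_add //.
  by rewrite -!mul_polyC; ring.
move: sq; rewrite size_MXaddC (negbTE nq) /=; case: D2 => [|D2] sq.
  by move: sq; rewrite ltnS leqn0 size_poly_eq0 (negbTE nq).
rewrite mulrDr mulrA joukowskiD [p * q * 'X]mulrC [p * c%:P]mulrC mul_polyC joukowskiZ.
rewrite (@joukowski_add D1 D2.+1 p sp).
rewrite addnS joukowski_mulX IH // joukowskiD [q * 'X]mulrC joukowski_mulX joukowskiC.
by rewrite -!mul_polyC; ring.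
Qed.

Lemma coef_jnum_exp n t : (jnum ^+ n)`_t = if odd t then 0 else ('C(n, t./2))%:R.
Proof.
elim: n t => [|n IH] t.
  rewrite expr0 coef1; case: t => [|[|t]] //=.
  by case: (odd t).
rewrite exprSr /jnum mulrDr mulr1 -/jnum coefD coefMXn !IH.
case: t => [|[|t]] /=; first by rewrite add0r !bin0.
  by rewrite add0r.
rewrite subn2 /=; case: (odd t) => /=; first by rewrite addr0.
by rewrite binS natrD addrC.
Qed.

Lemma coef_jnum_exp_top n j : (j <= n.*2)%N ->
  (jnum ^+ n)`_(n.*2 - j) = if odd j then 0 else ('C(n, j./2))%:R.
Proof.
move=> jn; rewrite coef_jnum_exp oddB // odd_double /=.
case Hj: (odd j) => //.
have ej : j = (j./2).*2 by rewrite halfK Hj subn0.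
rewrite {1}ej -doubleB half_double bin_sub //.
by rewrite -leq_double -ej.
Qed.

Lemma size_jnum : (size jnum <= 3)%N.
Proof.
rewrite /jnum (leq_trans (size_polyD _ _)) // geq_max size_polyXn size_poly1 //.
Qed.

Lemma coef_joukowski_top D (H : {poly R}) k : (size H <= D.+1)%N -> (k <= D)%N ->
  (joukowski D H)`_(D.*2 - k) =
  \sum_(l < k.+1) H`_(D - l) * ((jnum ^+ (D - l))`_((D - l).*2 - (k - l)) *+ 2 ^ l).
Proof.
move=> sH kD; rewrite /joukowski coef_sum.
pose F := fun i : nat => H`_i * ((jnum ^+ i)`_(D.*2 - k - (D - i)) *+ 2 ^ (D - i)).
transitivity (\sum_(i < D.+1) F i).
  apply: eq_bigr => i _; rewrite coefZ /jden exprMn_n mulrnAr coefMn coefMXn /F.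
  by rewrite ifF //; apply/negbTE; rewrite -leqNgt; lia.
rewrite (@big_ord_top _ F D k kD) => [|i Hi]; last first.
  rewrite /F [(jnum ^+ i)`_ _]nth_default ?mul0rn ?mulr0 //.
  apply: (leq_trans (size_poly_exp_leq _ _)); rewrite -subn1.
  apply: (@leq_trans (2 * i).+1); first by rewrite ltnS leq_mul2r; have := size_jnum; lia.
  rewrite -mul2n; lia.
rewrite /F.
apply: eq_bigr => l _; have := ltn_ord l; move=> lk.
congr (_ * (_ *+ _)); last by rewrite (_ : (D - (D - l) = l)%N) //; lia.
congr (_`_ _); rewrite -!mul2n; lia.
Qed.

Lemma size_cheb n : (size (cheb R n) <= n.+1)%N.
Proof.
suff H : forall n, (size (cheb R n) <= n.+1)%N /\ (size (cheb R n.+1) <= n.+2)%N.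
  by case: (H n).
clear n; elim=> [|n [IH1 IH2]]; first by rewrite cheb0 cheb1 size_poly1 size_polyX.
split=> //; rewrite chebSS (leq_trans (size_polyD _ _)) // geq_max size_polyN.
apply/andP; split; last by apply: (leq_trans IH1); lia.
apply: (leq_trans (size_polyMleq _ _)).
have H : (size (2%:R *: 'X : {poly R}) <= 2)%N.
  by rewrite (leq_trans (size_scale_leq _ _)) ?size_polyX.
apply: (@leq_trans (2 + n.+2).-1) => //; rewrite -!subn1 leq_sub2r // leq_add //.
Qed.

Lemma size_cheb_pred n : ((size (cheb R n)).-1 <= n)%N.
Proof. have := size_cheb n; lia. Qed.

Lemma joukowski_2X : joukowski 1 (2%:R *: 'X) = 2%:R * jnum.
Proof.
rewrite /joukowski !big_ord_recr big_ord0 /= !coefZ !coefX /= mulr0 scale0r add0r.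
by rewrite add0r mulr1 subnn expr0 expr1 mulr1 scaler_nat mulr_natl.
Qed.

Lemma joukowski_chebSS n : joukowski n.+2 (cheb R n.+2) =
  2%:R * jnum * joukowski n.+1 (cheb R n.+1) - jden ^+ 2 * joukowski n (cheb R n).
Proof.
rewrite chebSS joukowskiB.
have -> : joukowski n.+2 (2%:R *: 'X * cheb R n.+1) =
  joukowski (1 + n.+1) (2%:R *: 'X * cheb R n.+1) by [].
rewrite joukowskiM ?size_cheb ?joukowski_2X //; last first.
  by rewrite (leq_trans (size_scale_leq _ _)) ?size_polyX.
by rewrite -(@joukowski_add n 2 _ (size_cheb n)) addn2.
Qed.

Lemma joukowski_cheb n : joukowski n.+1 (cheb R n.+1) = (2 ^ n)%:R * ('X^((n.+1).*2) + 1).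
Proof.
suff H : forall n, joukowski n.+1 (cheb R n.+1) = (2 ^ n)%:R * ('X^((n.+1).*2) + 1) /\
   joukowski n.+2 (cheb R n.+2) = (2 ^ n.+1)%:R * ('X^((n.+2).*2) + 1) by case: (H n).
have Q0 : joukowski 0 (cheb R 0) = 1 by rewrite cheb0 -polyC1 joukowskiC expr0 scale1r.
have Q1 : joukowski 1 (cheb R 1) = jnum.
  rewrite cheb1 /joukowski !big_ord_recr big_ord0 /= !coefX /= scale0r add0r.
  by rewrite add0r scale1r subnn expr0 expr1 mulr1.
clear n; elim=> [|n [IH1 IH2]].
  split; first by rewrite Q1 /jnum expn0 /=; ring.
  rewrite joukowski_chebSS Q1 Q0 /jnum /jden expn1 /=; ring.
split=> //; rewrite joukowski_chebSS IH2 IH1.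
rewrite (_ : ((n.+3).*2 = (n.+1).*2 + 4)%N); last by rewrite -!mul2n; lia.
rewrite (_ : ((n.+2).*2 = (n.+1).*2 + 2)%N); last by rewrite -!mul2n; lia.
rewrite !exprD !expnS !natrM /jnum /jden; ring.
Qed.

Definition supp_mod (m c : nat) (r : {poly R}) := forall e, r`_e != 0 -> e = c %[mod m].

Lemma supp_mod0 m c : supp_mod m c 0.
Proof. by move=> e; rewrite coef0 eqxx. Qed.

Lemma supp_modD m c r1 r2 : supp_mod m c r1 -> supp_mod m c r2 -> supp_mod m c (r1 + r2).
Proof.
move=> H1 H2 e; rewrite coefD => H.
have [/eqP E|] := boolP (r1`_e == 0); last exact: H1.
by apply: H2; rewrite E add0r in H.
Qed.

Lemma supp_modZ m c k r : supp_mod m c r -> supp_mod m c (k *: r).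
Proof.
move=> H e; rewrite coefZ => Hk; apply: H; apply: contra_neq Hk => ->; exact: mulr0.
Qed.

Lemma supp_mod_sum m c I (s : seq I) (P : pred I) (F : I -> {poly R}) :
  (forall i, P i -> supp_mod m c (F i)) -> supp_mod m c (\sum_(i <- s | P i) F i).
Proof.
move=> H; apply: (big_ind (supp_mod m c)) => //; [exact: supp_mod0 | exact: supp_modD].
Qed.

Lemma supp_mod_eq m c c' r : c = c' %[mod m] -> supp_mod m c r -> supp_mod m c' r.
Proof. by move=> E H e /H ->. Qed.

Lemma supp_modM m c1 c2 r1 r2 : supp_mod m c1 r1 -> supp_mod m c2 r2 ->
  supp_mod m (c1 + c2) (r1 * r2).
Proof.
move=> H1 H2 e; rewrite coefM => H.
have [/existsP [j Hj] | /existsPn Hn] :=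
  boolP [exists j : 'I_e.+1, r1`_j * r2`_(e - j) != 0]; last first.
  by rewrite big1 ?eqxx // in H => j _; apply/eqP; move: (Hn j); rewrite negbK.
have Hj1 : r1`_j != 0 by apply: contra_neq Hj => ->; rewrite mul0r.
have Hj2 : r2`_(e - j) != 0 by apply: contra_neq Hj => ->; rewrite mulr0.
have je : (j <= e)%N by rewrite -ltnS.
rewrite -(subnKC je) -modnDm (H1 _ Hj1) (H2 _ Hj2) modnDm //.
Qed.

Lemma supp_mod1 m : supp_mod m 0 1.
Proof. by move=> e; rewrite coef1; case: (eqVneq e 0%N) => [-> | _] //; rewrite eqxx. Qed.

Lemma supp_modX m c r i : supp_mod m c r -> supp_mod m (c * i) (r ^+ i).
Proof.
move=> H; elim: i => [|i IH]; first by rewrite muln0 expr0; exact: supp_mod1.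
by rewrite exprS mulnS; apply: supp_modM.
Qed.

Lemma supp_mod_jden m : supp_mod m 1 jden.
Proof.
by move=> e; rewrite /jden coefMn coefX; case: (eqVneq e 1%N) => [-> | _] //; rewrite mul0rn eqxx.
Qed.

Lemma supp_mod_joukowski_cheb n : supp_mod n.+1 0 (joukowski n.+1 (cheb R n.+1)).
Proof.
rewrite joukowski_cheb => e; rewrite mulr_natl coefMn coefD coefXn coef1 => H.
have : (e == (n.+1).*2) || (e == 0%N).
  by apply: contraNT H => /norP [/negbTE-> /negbTE->]; rewrite add0r mul0rn.
case/orP=> /eqP ->; last by [].
by rewrite -mul2n modnMl mod0n.
Qed.

Lemma joukowski_cheb_exp n i :
  joukowski (i * n.+1) (cheb R n.+1 ^+ i) = (joukowski n.+1 (cheb R n.+1)) ^+ i.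
Proof.
elim: i => [|i IH]; first by rewrite mul0n !expr0 -polyC1 joukowskiC expr0 scale1r.
rewrite mulSn !exprS joukowskiM ?size_cheb ?IH //.
apply: (leq_trans (size_poly_exp_leq _ _)); rewrite ltnS mulnC leq_mul2l.
by rewrite size_cheb_pred orbT.
Qed.

Lemma supp_mod_joukowski_comp_cheb (V : {poly R}) n D : ((size V).-1 * n.+1 <= D)%N ->
  supp_mod n.+1 D (joukowski D (V \Po cheb R n.+1)).
Proof.
move=> sV; rewrite comp_polyE joukowski_sum; apply: supp_mod_sum => i _.
rewrite joukowskiZ; apply: supp_modZ.
have iD : (i * n.+1 <= D)%N.
  apply: leq_trans sV; rewrite leq_mul2r; apply/orP; right.
  by case: i => i /= Hi; rewrite -ltnS (ltn_predK Hi).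
rewrite -{2}(subnKC iD) joukowski_add; last first.
  apply: (leq_trans (size_poly_exp_leq _ _)); rewrite ltnS mulnC leq_mul2l.
  by rewrite size_cheb_pred orbT.
rewrite joukowski_cheb_exp.
apply: (@supp_mod_eq _ ((D - i * n.+1) + 0)%N).
  by rewrite addn0 -{2}(subnKC iD) modnMDl.
apply: supp_modM; last by rewrite -{1}(mul0n i); apply: supp_modX; exact: supp_mod_joukowski_cheb.
by rewrite -{1}(mul1n (D - i * n.+1)%N); apply: supp_modX; exact: supp_mod_jden.
Qed.

Lemma coef_jden_expM k (r : {poly R}) e : (jden ^+ k * r)`_(e + k) = r`_e *+ 2 ^ k.
Proof.
rewrite /jden exprMn_n mulrnAl coefMn coefXnM ifF ?addnK //.
by apply/negbTE; rewrite -leqNgt leq_addl.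
Qed.

Lemma coef_affine_exp (a b : R) n j :
  ((a *: 'X + b%:P) ^+ n)`_j = a ^+ j * b ^+ (n - j) *+ 'C(n, j).
Proof.
rewrite addrC exprDn.
rewrite (eq_bigr (fun k : 'I_n.+1 => (b ^+ (n - k) * a ^+ k *+ 'C(n, k)) *: 'X^k)); last first.
  by move=> k _; rewrite -polyC_exp exprZn mul_polyC scalerA scalerMnl.
rewrite coef_sum (eq_bigr (fun i : 'I_n.+1 =>
  if (i == j :> nat) then b ^+ (n - i) * a ^+ i *+ 'C(n, i) else 0)); last first.
  by move=> i _; rewrite coefZ coefXn eq_sym; case: eqP => _; rewrite ?mulr1 ?mulr0.
rewrite -big_mkcond (big_ord1_eq _ (fun k => b ^+ (n - k) * a ^+ k *+ 'C(n, k))); case: ltnP => H.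
  by rewrite mulrC.
by rewrite bin_small ?mulr0n.
Qed.

Lemma coef_comp_affine (G : {poly R}) (a b : R) j :
  (G \Po (a *: 'X + b%:P))`_j =
  \sum_(i < size G) G`_i * (a ^+ j * b ^+ (i - j) *+ 'C(i, j)).
Proof. by rewrite coef_comp_poly; apply: eq_bigr => i _; rewrite coef_affine_exp. Qed.

Lemma coef_comp_scale (G : {poly R}) (a : R) j :
  (G \Po (a *: 'X + 0%:P))`_j = a ^+ j * G`_j.
Proof.
rewrite addr0 comp_polyE.
rewrite (eq_bigr (fun i : 'I_(size G) => (G`_i * a ^+ i) *: 'X^i)); last first.
  by move=> i _; rewrite exprZn scalerA.
rewrite coef_sum
  (eq_bigr (fun i : 'I_(size G) => if (i == j :> nat) then G`_i * a ^+ i else 0)); last first.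
  by move=> i _; rewrite coefZ coefXn eq_sym; case: eqP => _; rewrite ?mulr1 ?mulr0.
rewrite -big_mkcond (big_ord1_eq _ (fun k => G`_k * a ^+ k)).
case: ltnP => H; first by rewrite mulrC.
by rewrite nth_default // mulr0.
Qed.

Lemma coef_joukowski_top0 (H : {poly R}) D : (size H <= D.+1)%N ->
  (joukowski D H)`_(D.*2 - 0) = H`_D.
Proof.
move=> sH; rewrite coef_joukowski_top // !big_ord_recr big_ord0 /= add0r.
rewrite !coef_jnum_exp_top /= ?subn0 ?bin0 //; ring.
Qed.

Lemma coef_joukowski_top1 (H : {poly R}) D : (size H <= D.+1)%N -> (1 <= D)%N ->
  (joukowski D H)`_(D.*2 - 1) = H`_(D - 1) * 2%:R.
Proof.
move=> sH D1; rewrite coef_joukowski_top // !big_ord_recr big_ord0 /= add0r.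
rewrite !coef_jnum_exp_top /=; try by rewrite -mul2n; lia.
rewrite !subn0 !bin0 !mul0rn !mulr0 !add0r; ring.
Qed.

Lemma coef_joukowski_top2 (H : {poly R}) D : (size H <= D.+1)%N -> (2 <= D)%N ->
  (joukowski D H)`_(D.*2 - 2) = H`_D * D%:R + H`_(D - 2) * 4%:R.
Proof.
move=> sH D2; rewrite coef_joukowski_top // !big_ord_recr big_ord0 /= add0r.
rewrite !coef_jnum_exp_top /=; try by rewrite -mul2n; lia.
rewrite !subn0 !bin1 !bin0 !mul0rn !mulr0 !addr0; ring.
Qed.

Lemma coef_joukowski_top4 (H : {poly R}) D : (size H <= D.+1)%N -> (4 <= D)%N ->
  (joukowski D H)`_(D.*2 - 4) = H`_D * ('C(D, 2))%:R + H`_(D - 2) * (D - 2)%:R * 4%:R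
     + H`_(D - 4) * 16%:R.
Proof.
move=> sH D4; rewrite coef_joukowski_top // !big_ord_recr big_ord0 /= add0r.
rewrite !coef_jnum_exp_top /=; try by rewrite -mul2n; lia.
rewrite !subn0 !bin1 !bin0 !mul0rn !mulr0 !addr0; ring.
Qed.

Lemma coef_joukowski_top6 (H : {poly R}) D : (size H <= D.+1)%N -> (6 <= D)%N ->
  (joukowski D H)`_(D.*2 - 6) = H`_D * ('C(D, 3))%:R + H`_(D - 2) * ('C(D - 2, 2))%:R * 4%:R
     + H`_(D - 4) * (D - 4)%:R * 16%:R + H`_(D - 6) * 64%:R.
Proof.
move=> sH D6; rewrite coef_joukowski_top //.
rewrite !big_ord_recr big_ord0 /= add0r.
rewrite !coef_jnum_exp_top /=; try by rewrite -mul2n; lia.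
rewrite !subn0 !bin1 !bin0 !mul0rn !mulr0 !addr0.
ring.
Qed.

Lemma natr_bin2 n : ('C(n, 2))%:R * 2%:R = n%:R * (n%:R - 1) :> R.
Proof.
case: n => [|n]; first by rewrite /= !mul0r.
have E : ('C(n.+1, 2) * 2 = n.+1 * n)%N.
  by rewrite -[2%N]/(2`!) bin_ffact ffactnS ffactn1.
by rewrite -natrM E natrM -addn1 natrD addrK.
Qed.

Lemma natr_bin3 n : ('C(n, 3))%:R * 6%:R = n%:R * (n%:R - 1) * (n%:R - 2) :> R.
Proof.
case: n => [|[|n]]; first by rewrite /= !mul0r.
  by rewrite bin_small // mul0r subrr mulr0 mul0r.
have E : ('C(n.+2, 3) * 6 = n.+2 * n.+1 * n)%N.
  by rewrite -[6%N]/(3`!) bin_ffact !ffactnS ffactn0 muln1 mulnA.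
rewrite -natrM E !natrM -[n.+2]addn2 -[n.+1]addn1 !natrD.
ring.
Qed.

Lemma coef_comp_affine_top (a b : R) (G : {poly R}) D k : size G = D.+1 -> (k <= D)%N ->
  (G \Po (a *: 'X + b%:P))`_(D - k) =
  \sum_(l < k.+1) G`_(D - l) * (a ^+ (D - k) * b ^+ ((D - l) - (D - k)) *+ 'C(D - l, D - k)).
Proof.
move=> sG kD; rewrite coef_comp_affine sG.
rewrite (@big_ord_top _ (fun i => G`_i * (a ^+ (D - k) * b ^+ (i - (D - k)) *+ 'C(i, D - k)))
  D k kD) //.
by move=> i Hi; rewrite bin_small ?mulr0n ?mulr0.
Qed.

Lemma coef_comp_affine_top0 (a b : R) (G : {poly R}) D : size G = D.+1 ->
  (G \Po (a *: 'X + b%:P))`_D = a ^+ D * G`_D.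
Proof.
move=> sG; have := @coef_comp_affine_top a b G D 0 sG (leq0n D).
rewrite subn0 big_ord_recr big_ord0 /= add0r !subn0 subnn expr0 mulr1 binn mulr1n => ->.
by rewrite mulrC.
Qed.

Lemma coef_comp_affine_top1 (a b : R) (G : {poly R}) D : size G = D.+1 -> (1 <= D)%N ->
  (G \Po (a *: 'X + b%:P))`_(D - 1) = a ^+ (D - 1) * (G`_(D - 1) + G`_D * b * D%:R).
Proof.
move=> sG D1; rewrite (@coef_comp_affine_top a b G D 1 sG D1).
rewrite !big_ord_recr big_ord0 /= add0r !subn0 subnn expr0 mulr1 binn mulr1n.
have -> : (D - (D - 1) = 1)%N by lia.
rewrite bin_sub // bin1 expr1; ring.
Qed.

Lemma coef_comp_affine_top2 (a b : R) (G : {poly R}) D : size G = D.+1 -> (2 <= D)%N ->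
  (G \Po (a *: 'X + b%:P))`_(D - 2) = a ^+ (D - 2) *
    (G`_(D - 2) + G`_(D - 1) * b * (D - 1)%:R + G`_D * b ^+ 2 * ('C(D, 2))%:R).
Proof.
move=> sG D2; rewrite (@coef_comp_affine_top a b G D 2 sG D2).
rewrite !big_ord_recr big_ord0 /= add0r !subn0 subnn expr0 mulr1 binn mulr1n.
have -> : (D - (D - 2) = 2)%N by lia.
have -> : (D - 1 - (D - 2) = 1)%N by lia.
have -> : 'C(D - 1, D - 2) = (D - 1)%N.
  by rewrite (_ : (D - 2 = D - 1 - 1)%N) ?bin_sub ?bin1 //; lia.
rewrite bin_sub // expr1; ring.
Qed.

End Joukowski.

Arguments jden {R}.
Arguments joukowski {R}.
Arguments supp_mod {R}.

Section ChebyshevSupport.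
Variable R : numDomainType.

(* The sum may have smaller size than its summands, so the supports are read off in the
   transform of the larger degree M, which is (2X)^(M - D) times the one of degree D. *)
Lemma dvdn_of_joukowski_coef (V1 V2 : {poly R}) n1 n2 D k : (0 < n1)%N -> (0 < n2)%N ->
  size ((V1 \Po cheb R n1) + (V2 \Po cheb R n2)) = D.+1 -> (k <= D)%N ->
  (joukowski D ((V1 \Po cheb R n1) + (V2 \Po cheb R n2)))`_(D.*2 - k) != 0 ->
  (n1 %| D - k)%N || (n2 %| D - k)%N.
Proof.
case: n1 => // n1 _; case: n2 => // n2 _.
set F := _ + _ => sizeF kD coef_neq0.
set M := maxn ((size V1).-1 * n1.+1) ((size V2).-1 * n2.+1).
have size_comp V n : (size (V \Po cheb R n.+1) <= ((size V).-1 * n.+1).+1)%N.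
  by apply: (leq_trans (size_comp_poly_leq _ _)); rewrite ltnS leq_mul2l size_cheb_pred orbT.
have D_leM : (D <= M)%N.
  rewrite -ltnS -sizeF (leq_trans (size_polyD _ _)) // geq_max.
  by rewrite !(leq_trans (size_comp _ _)) // ltnS ?leq_maxl ?leq_maxr.
have coefM_neq0 : (joukowski M F)`_(M + (D - k)) != 0.
  have -> : (M + (D - k) = D.*2 - k + (M - D))%N by rewrite -mul2n; lia.
  rewrite -{1}(subnKC D_leM) joukowski_add ?sizeF // coef_jden_expM.
  by rewrite mulrn_eq0 negb_or coef_neq0 expn_eq0.
have dvd_of_coef n (V : {poly R}) : ((size V).-1 * n.+1 <= M)%N ->
    (joukowski M (V \Po cheb R n.+1))`_(M + (D - k)) != 0 -> (n.+1 %| D - k)%N.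
  move=> /supp_mod_joukowski_comp_cheb supp /supp /eqP.
  by rewrite -{2}[M]addn0 eqn_modDl mod0n.
move: coefM_neq0; rewrite /F joukowskiD coefD.
have [/(dvd_of_coef _ _ (leq_maxl _ _)) -> //|/negPn/eqP ->] :=
  boolP ((joukowski M (V1 \Po cheb R n1.+1))`_(M + (D - k)) != 0).
by rewrite add0r => /(dvd_of_coef _ _ (leq_maxr _ _)) ->; rewrite orbT.
Qed.

Lemma joukowski_cheb_comp_top_gap (W : {poly R}) n D : (6 < n)%N ->
  size (W \Po cheb R n) = D.+1 -> (0 < D)%N ->
  (6 <= D)%N /\ forall k, (0 < k < 7)%N -> (joukowski D (W \Po cheb R n))`_(D.*2 - k) = 0.
Proof.
case: n => // n n_gt6 sizeF D_gt0.
have dvd_top k : (k <= D)%N -> (joukowski D (W \Po cheb R n.+1))`_(D.*2 - k) != 0 ->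
    (n.+1 %| D - k)%N.
  move=> kD; rewrite -[W \Po _]addr0 -(comp_poly0 (cheb R n.+1)) => /dvdn_of_joukowski_coef.
  by rewrite orbb; apply => //; rewrite comp_poly0 addr0.
have n_dvdD : (n.+1 %| D)%N.
  rewrite -(subn0 D); apply: dvd_top => //.
  rewrite coef_joukowski_top0 ?sizeF // -[D in _`_D]/(D.+1.-1) -sizeF -lead_coefE.
  by rewrite lead_coef_eq0 -size_poly_eq0 sizeF.
have n_leD : (n.+1 <= D)%N by apply: dvdn_leq.
split=> [|k /andP[k_gt0 k_lt7]]; first by lia.
have kD : (k <= D)%N by lia.
apply/eqP; apply: contraTT k_lt7 => /(dvd_top k kD) n_dvd.
by have := dvdn_sub n_dvdD n_dvd; rewrite subKn // => /(dvdn_leq k_gt0); lia.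
Qed.

End ChebyshevSupport.

Arguments joukowski_cheb_comp_top_gap {R W n D}.

Lemma size_affine (R : idomainType) (a b : R) : a != 0 -> size (a *: 'X + b%:P) = 2.
Proof.
by move=> a_neq0; rewrite -mul_polyC size_MXaddC polyC_eq0 (negbTE a_neq0) /= size_polyC a_neq0.
Qed.

Lemma affineK (R : fieldType) (a b : R) : a != 0 ->
  (a *: 'X + b%:P) \Po (a^-1 *: 'X + (- (b / a))%:P) = 'X.
Proof.
move=> a_neq0; rewrite comp_polyD comp_polyZ comp_polyX comp_polyC scalerDr scalerA.
by rewrite mulfV // scale1r scale_polyC -addrA -polyCD mulrN mulrCA mulfV // mulr1 addNr addr0.
Qed.

Section AffineRigidity.
Variable R : realFieldType.
Variables (m1 m2 : nat) (a : R) (G : {poly R}) (D : nat).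
Hypotheses (m1_gt2 : (2 < m1)%N) (m2_gt2 : (2 < m2)%N) (a_neq0 : a != 0).
Hypotheses (sizeG : size G = D.+1) (D_ge6 : (6 <= D)%N).
Hypothesis top_gap : forall k, (0 < k < 7)%N -> (joukowski D G)`_(D.*2 - k) = 0.

Let top_dvdn (H : {poly R}) := forall k, (k <= 6)%N ->
  (joukowski D H)`_(D.*2 - k) != 0 -> (m1 %| D - k)%N || (m2 %| D - k)%N.

Let sizeG_le : (size G <= D.+1)%N. Proof. by rewrite sizeG. Qed.

Let size_comp_affine b : size (G \Po (a *: 'X + b%:P)) = D.+1.
Proof. by rewrite size_comp_poly2 ?size_affine. Qed.

Let lead_neq0 : G`_D != 0.
Proof. by rewrite -[D in _`_D]/(D.+1.-1) -sizeG -lead_coefE lead_coef_eq0 -size_poly_eq0 sizeG. Qed.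

Let natrD_neq0 : (D%:R : R) != 0.
Proof. by rewrite pnatr_eq0 -lt0n; lia. Qed.

Let lead_dvdn b : top_dvdn (G \Po (a *: 'X + b%:P)) -> (m1 %| D)%N || (m2 %| D)%N.
Proof.
move=> dvdF; rewrite -(subn0 D); apply: dvdF => //.
by rewrite coef_joukowski_top0 ?size_comp_affine // coef_comp_affine_top0 // mulf_neq0 ?expf_neq0.
Qed.

Let coefG2 : G`_(D - 2) = - (G`_D * D%:R) / 4%:R.
Proof.
have := top_gap 2 isT; rewrite coef_joukowski_top2 //; last by lia.
by move=> E; apply: (@mulIf _ 4%:R); rewrite ?pnatr_eq0 // mulfVK ?pnatr_eq0 //; lra.
Qed.

(* The shifted polynomial has a nonzero coefficient at 2D - 1, so the one at 2D - 2
   must vanish; this pins down a^2 = 1 - 2 (D - 1) b^2. *)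
Lemma affine_shift_sq_lt1 b : b != 0 -> top_dvdn (G \Po (a *: 'X + b%:P)) -> a ^+ 2 < 1.
Proof.
move=> b_neq0 dvdF.
have coefG1 : G`_(D - 1) = 0.
  have := top_gap 1 isT; rewrite coef_joukowski_top1 //; last by lia.
  by move/eqP; rewrite mulf_eq0 pnatr_eq0 orbF => /eqP.
have dvd1 : (m1 %| D - 1)%N || (m2 %| D - 1)%N.
  apply: dvdF => //; rewrite coef_joukowski_top1 ?size_comp_affine //; last by lia.
  rewrite coef_comp_affine_top1 //; last by lia.
  by rewrite coefG1 add0r !mulf_neq0 // ?expf_neq0 // ?pnatr_eq0.
have coefF2 : (joukowski D (G \Po (a *: 'X + b%:P)))`_(D.*2 - 2) = 0.
  have D_ge2 : (2 <= D)%N by lia.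
  have not_dvd2 := no_three_consecutive_multiples m1_gt2 m2_gt2 D_ge2 (lead_dvdn b dvdF) dvd1.
  by apply/eqP; apply: contraNT not_dvd2; apply: dvdF.
move: coefF2; rewrite coef_joukowski_top2 ?size_comp_affine //; last by lia.
rewrite coef_comp_affine_top0 // coef_comp_affine_top2 //; last by lia.
have -> : a ^+ D = a ^+ (D - 2) * a ^+ 2 by rewrite -exprD subnK //; lia.
rewrite coefG1 coefG2 natrB; last by lia.
have -> : ('C(D, 2))%:R = (D%:R : R) * (D%:R - 1) / 2%:R.
  by rewrite -natr_bin2 mulfK ?pnatr_eq0.
move=> E.
have /eqP : a ^+ (D - 2) * (G`_D * D%:R * (a ^+ 2 - 1 + 2%:R * (D%:R - 1) * b ^+ 2)) = 0.
  by rewrite -[RHS]E; field.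
rewrite !mulf_eq0 expf_eq0 (negbTE a_neq0) (negbTE lead_neq0) (negbTE natrD_neq0) andbF /=.
have b2_gt0 : 0 < b ^+ 2 by rewrite lt0r sqr_ge0 andbT expf_neq0.
have : (6%:R : R) <= D%:R by rewrite ler_nat.
move=> D_ge6R /eqP key; nra.
Qed.

Let natrB2 : ((D - 2)%:R : R) = D%:R - 2%:R.
Proof. by rewrite natrB //; lia. Qed.

Let natrB4 : ((D - 4)%:R : R) = D%:R - 4%:R.
Proof. by rewrite natrB //; lia. Qed.

Let natr_binD2 : ('C(D, 2))%:R = (D%:R : R) * (D%:R - 1) / 2%:R.
Proof. by rewrite -natr_bin2 mulfK ?pnatr_eq0. Qed.

Let natr_binDB2 : ('C(D - 2, 2))%:R = ((D%:R : R) - 2%:R) * (D%:R - 2%:R - 1) / 2%:R.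
Proof. by rewrite -natrB2 -natr_bin2 mulfK ?pnatr_eq0. Qed.

Let natr_binD3 : ('C(D, 3))%:R = (D%:R : R) * (D%:R - 1) * (D%:R - 2%:R) / 6%:R.
Proof. by rewrite -natr_bin3 mulfK ?pnatr_eq0. Qed.

Let coefG4 : G`_(D - 4) = - (G`_D * ((D%:R : R) * (D%:R - 1) / 2%:R)
     + G`_(D - 2) * (D%:R - 2%:R) * 4%:R) / 16%:R.
Proof.
have := top_gap 4 isT; rewrite coef_joukowski_top4 //; last by lia.
rewrite natrB2 natr_binD2 => E.
by apply: (@mulIf _ 16%:R); rewrite ?pnatr_eq0 // mulfVK ?pnatr_eq0 //; lra.
Qed.

Let coefG6 : G`_(D - 6) = - (G`_D * ((D%:R : R) * (D%:R - 1) * (D%:R - 2%:R) / 6%:R)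
     + G`_(D - 2) * (((D%:R : R) - 2%:R) * (D%:R - 2%:R - 1) / 2%:R) * 4%:R
     + G`_(D - 4) * (D%:R - 4%:R) * 16%:R) / 64%:R.
Proof.
have := top_gap 6 isT; rewrite coef_joukowski_top6 //.
rewrite natrB4 natr_binD3 natr_binDB2 => E.
by apply: (@mulIf _ 64%:R); rewrite ?pnatr_eq0 // mulfVK ?pnatr_eq0 //; lra.
Qed.

(* If a^2 > 1, the coefficients at 2D - 2, 2D - 4 and 2D - 6 of the rescaled polynomial
   are G_D D (a^2 - 1) times positive quantities. *)
Lemma affine_scale_sq_le1 : coprime m1 m2 -> top_dvdn (G \Po (a *: 'X + 0%:P)) -> a ^+ 2 <= 1.
Proof.
move=> cop dvdF; rewrite leNgt; apply/negP => a2_gt1.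
set F := G \Po _ in dvdF.
have coefF j : F`_j = a ^+ j * G`_j by exact: coef_comp_scale.
have sizeF : (size F <= D.+1)%N by rewrite size_comp_affine.
have D_ge6R : (6%:R : R) <= D%:R by rewrite ler_nat.
set t := a ^+ 2 - 1; have t_gt0 : 0 < t by rewrite subr_gt0.
set A := a ^+ (D - 6); have A_neq0 : A != 0 by rewrite expf_neq0.
have powA l : (l <= 6)%N -> a ^+ (D - l) = A * a ^+ (6 - l).
  by move=> l_le6; rewrite -exprD; congr (_ ^+ _); lia.
have powD : a ^+ D = A * a ^+ 6 by rewrite -(powA 0%N) ?subn0.
have coefF2 : (joukowski D F)`_(D.*2 - 2) != 0.
  have -> : (joukowski D F)`_(D.*2 - 2) = A * a ^+ 4 * (G`_D * D%:R * t).
    rewrite coef_joukowski_top2 // ?coefF; last by lia.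
    by rewrite powD (powA 2%N) // coefG2 /t; field.
  by rewrite !mulf_neq0 // ?expf_neq0 // lt0r_neq0.
have coefF4 : (joukowski D F)`_(D.*2 - 4) != 0.
  have -> : (joukowski D F)`_(D.*2 - 4) =
      A * a ^+ 2 * (G`_D * D%:R * t * ((D%:R - 1) * t + 2%:R)) / 2%:R.
    rewrite coef_joukowski_top4 // ?coefF; last by lia.
    by rewrite powD (powA 2%N) // (powA 4%N) // natrB2 natr_binD2 coefG4 coefG2 /t; field.
  rewrite !mulf_neq0 // ?expf_neq0 // ?invr_eq0 ?pnatr_eq0 // lt0r_neq0 //; nra.
have coefF6 : (joukowski D F)`_(D.*2 - 6) != 0.
  have -> : (joukowski D F)`_(D.*2 - 6) = A * (G`_D * D%:R * t * (6%:R
      + 6%:R * (D%:R - 2%:R) * t + (D%:R - 1) * (D%:R - 2%:R) * t ^+ 2)) / 6%:R.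
    rewrite coef_joukowski_top6 // ?coefF.
    rewrite powD (powA 2%N) // (powA 4%N) // (powA 6%N) // natrB4.
    by rewrite natr_binDB2 natr_binD3 coefG6 coefG4 coefG2 /t; field.
  rewrite !mulf_neq0 // ?expf_neq0 // ?invr_eq0 ?pnatr_eq0 // lt0r_neq0 //.
  have : 0 < (D%:R - 2%:R) * t by apply: mulr_gt0 => //; lra.
  have : 0 <= (D%:R - 1) * (D%:R - 2%:R) * t ^+ 2.
    by apply: mulr_ge0; [apply: mulr_ge0; lra | exact: sqr_ge0].
  lra.
have := no_four_even_spaced_multiples m1_gt2 m2_gt2 cop D_ge6 (lead_dvdn 0 dvdF)
  (dvdF 2%N isT coefF2) (dvdF 4%N isT coefF4).
by rewrite dvdF.
Qed.

End AffineRigidity.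

Arguments affine_shift_sq_lt1 {R m1 m2 a G D}.
Arguments affine_scale_sq_le1 {R m1 m2 a G D}.

Lemma affine_cheb_rigidity (R : realFieldType) (V1 V2 W : {poly R}) (m1 m2 n : nat) (a b : R) :
  a != 0 -> (2 < m1)%N -> (2 < m2)%N -> (6 < n)%N -> coprime m1 m2 ->
  (V1 \Po cheb R m1) + (V2 \Po cheb R m2) = (W \Po cheb R n) \Po (a *: 'X + b%:P) ->
  (1 < size (W \Po cheb R n))%N ->
  a ^+ 2 <= 1 /\ (b != 0 -> a ^+ 2 < 1).
Proof.
move=> a_neq0 m1_gt2 m2_gt2 n_gt6 cop eqVW sizeW.
set G := W \Po cheb R n in eqVW sizeW.
have sizeG : size G = (size G).-1.+1 by rewrite prednK // ltnW.
set D := (size G).-1 in sizeG.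
have [|D_ge6 top_gap] := joukowski_cheb_comp_top_gap n_gt6 sizeG; first by lia.
have dvdF k : (k <= 6)%N -> (joukowski D (G \Po (a *: 'X + b%:P)))`_(D.*2 - k) != 0 ->
    (m1 %| D - k)%N || (m2 %| D - k)%N.
  move=> k_le6; rewrite -eqVW; apply: dvdn_of_joukowski_coef; try lia.
  by rewrite eqVW size_comp_poly2 ?size_affine.
have [b0|b_neq0] := eqVneq b 0.
  rewrite b0 in dvdF *; split=> //.
  exact: affine_scale_sq_le1 m1_gt2 m2_gt2 a_neq0 sizeG D_ge6 top_gap cop dvdF.
have a2_lt1 := affine_shift_sq_lt1 m1_gt2 m2_gt2 a_neq0 sizeG D_ge6 top_gap _ b_neq0 dvdF.
by split=> [|_]; rewrite ?ltW.
Qed.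

Arguments affine_cheb_rigidity {R V1 V2 W m1 m2 n a b}.

Theorem proposition3p1 (R : rcfType)
  (V1 V2 U tV1 tV2 tU : {poly R}) (alpha beta : R)
  (m1 m2 tm1 tm2 : nat) :
  alpha != 0 ->
  (3 <= m1)%N -> (3 <= m2)%N -> (3 <= tm1)%N -> (3 <= tm2)%N ->
  coprime m1 m2 -> coprime tm1 tm2 ->
  let L := alpha *: 'X + beta%:P in
  (V1 \Po cheb R m1) + (V2 \Po cheb R m2) = (tU \Po cheb R (tm1 * tm2)) \Po L ->
  ((tV1 \Po cheb R tm1) \Po L) + ((tV2 \Po cheb R tm2) \Po L)
    = U \Po cheb R (m1 * m2) ->
  (1 < size (@polyseq R ((V1 \Po cheb R m1) + (V2 \Po cheb R m2))))%N ->
  (1 < size (@polyseq R ((tU \Po cheb R (tm1 * tm2)) \Po L)))%N ->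
  (1 < size (@polyseq R (((tV1 \Po cheb R tm1) \Po L) + ((tV2 \Po cheb R tm2) \Po L))))%N ->
  (1 < size (@polyseq R (U \Po cheb R (m1 * m2))))%N ->
  (alpha = 1 \/ alpha = -1) /\ beta = 0.
Proof.
move=> a_neq0 m1_gt2 m2_gt2 tm1_gt2 tm2_gt2 cop tcop L eq1 eq2 _ nonconst1 _ nonconst2.
rewrite size_comp_poly2 ?size_affine // in nonconst1.
have tm_gt6 : (6 < tm1 * tm2)%N by nia.
have m_gt6 : (6 < m1 * m2)%N by nia.
have [a2_le1 a2_lt1] := affine_cheb_rigidity a_neq0 m1_gt2 m2_gt2 tm_gt6 cop eq1 nonconst1.
have eq2' : (tV1 \Po cheb R tm1) + (tV2 \Po cheb R tm2)
    = (U \Po cheb R (m1 * m2)) \Po (alpha^-1 *: 'X + (- (beta / alpha))%:P).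
  by rewrite -eq2 -comp_polyD -comp_polyA affineK // comp_polyXr.
have [ai2_le1 _] :=
  affine_cheb_rigidity (invr_neq0 a_neq0) tm1_gt2 tm2_gt2 m_gt6 tcop eq2' nonconst2.
have a2_gt0 : 0 < alpha ^+ 2 by rewrite exprn_even_gt0 ?a_neq0.
have a2_eq1 : alpha ^+ 2 = 1.
  by apply/le_anti; rewrite a2_le1 -invf_le1 // -exprVn.
split; first by move/eqP: a2_eq1; rewrite sqrf_eq1 => /orP[]/eqP; [left | right].
by apply/eqP; apply: contraT => /a2_lt1; rewrite a2_eq1 ltxx.
Qed.
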